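(* Let $p$ be a state with $p\neq g$ (equivalently, the slopes $p_i/g_i$ of $\beta(p)$ are not all equal). Then the Gibbs state $g$ lies in the interior of $p^{TP}=\{Tp:T\in TP(d)\}$, taken relative to the affine hyperplane $\{x\in\mathbb{R}^d:\sum_i x_i=1\}$.
   Context: Fix $d\ge 2$, $\beta\in(0,\infty)$ and pairwise distinct reals $E_0=0,E_1,\dots,E_{d-1}$. Put $q_{m,n}=e^{-\beta(E_m-E_n)}$, $Z=\sum_j q_{j,0}$, and the Gibbs vector $g_i=q_{i,0}/Z$. A state is a probability vector in $\mathbb{R}^d$. $TP(d)$ is the set of $d\times d$ real matrices with non-negative entries, columns summing to $1$, and $Tg=g$. The thermomajorization curve $\beta(p)$ of a state $p$ is the concave piecewise-linear curve from $(0,0)$ to $(1,1)$ whose segments have horizontal lengths $g_i$ and slopes $p_i/g_i$, arranged in non-increasing order of slope. *)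

From HB Require Import structures.
From mathcomp Require Import all_boot all_order all_algebra.
From mathcomp Require Import all_classical all_reals all_analysis.
Set Implicit Arguments. Unset Strict Implicit. Unset Printing Implicit Defensive.
Import Order.TTheory GRing.Theory Num.Theory.
Local Open Scope ring_scope.

Definition qfac (R : realType) (d : nat) (beta : R) (E : 'I_d -> R)
  (m k : 'I_d) : R := expR (- beta * (E m - E k)).

Definition gibbs (R : realType) (n : nat) (beta : R) (E : 'I_n.+2 -> R)
  (i : 'I_n.+2) : R :=
  qfac beta E i ord0 / \sum_(j < n.+2) qfac beta E j ord0.

Definition is_state (R : realType) (d : nat) (p : 'I_d -> R) : Prop :=
  (forall i, 0 <= p i) /\ \sum_(i < d) p i = 1.

Definition mxapp (R : realType) (d : nat) (T : 'M[R]_d) (x : 'I_d -> R)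
  : 'I_d -> R := fun i => \sum_(j < d) T i j * x j.

Definition TP (R : realType) (n : nat) (beta : R) (E : 'I_n.+2 -> R)
  (T : 'M[R]_n.+2) : Prop :=
  (forall i j, 0 <= T i j) /\
  (forall j, \sum_(i < n.+2) T i j = 1) /\
  mxapp T (gibbs beta E) = gibbs beta E.

Definition TP_orbit (R : realType) (n : nat) (beta : R) (E : 'I_n.+2 -> R)
  (p : 'I_n.+2 -> R) : set ('I_n.+2 -> R) :=
  [set x | exists T, TP beta E T /\ x = mxapp T p].

(* y lies in the interior of S relative to the hyperplane {sum x_i = 1}
   (max-norm balls; all norms on R^d are equivalent) *)
Definition rel_interior_simplex_plane (R : realType) (d : nat)
  (S : set ('I_d -> R)) (y : 'I_d -> R) : Prop :=
  exists eps : R, 0 < eps /\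
    forall x : 'I_d -> R, \sum_(i < d) x i = 1 ->
      (forall i, `|x i - y i| < eps) -> S x.

From HB Require Import structures.
From mathcomp Require Import all_boot all_order all_algebra.
From mathcomp Require Import all_classical all_reals all_analysis.
Set Implicit Arguments. Unset Strict Implicit. Unset Printing Implicit Defensive.
Import Order.TTheory GRing.Theory Num.Theory.
Local Open Scope ring_scope.

(* Since p and g are distinct probability vectors, some linear form v
   separates them: v.g = 0 and v.p = 1.  For x on the hyperplane near g,
   the matrix T = g 1^T + (x - g) v^T then satisfies T g = g and T p = x,
   its columns sum to 1 because the entries of x - g sum to 0, and its
   entries are nonnegative as soon as x - g is small compared with the
   smallest entry of g. *)

Section RankOnePerturbation.
Context {R : realType} {d : nat}.
Implicit Types (g p u v y : 'I_d -> R).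

Definition perturb_mx g u v : 'M[R]_d := \matrix_(i, j) (g i + u i * v j).

Lemma mxapp_perturb_mx g u v y :
  mxapp (perturb_mx g u v) y =
  (fun i => g i * \sum_j y j + u i * \sum_j v j * y j).
Proof.
apply: funext => i; rewrite /mxapp.
under eq_bigr do rewrite mxE mulrDl -mulrA.
by rewrite big_split /= -!mulr_sumr.
Qed.

Lemma sum_col_perturb_mx g u v j :
  \sum_i perturb_mx g u v i j = \sum_i g i + v j * \sum_i u i.
Proof.
under eq_bigr do rewrite mxE.
by rewrite big_split /= mulr_sumr; under [X in _ + X]eq_bigr do rewrite mulrC.
Qed.

Lemma perturb_mx_ge0 g u v i j :
  `|u i| * `|v j| <= g i -> 0 <= perturb_mx g u v i j.
Proof.
move=> small; rewrite mxE -[u i * v j]opprK subr_ge0.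
by rewrite (le_trans (ler_norm _)) // normrN normrM.
Qed.

Lemma separating_functional g p :
  \sum_i g i = 1 -> \sum_i p i = 1 -> p <> g ->
  exists v, \sum_j v j * g j = 0 /\ \sum_j v j * p j = 1.
Proof.
move=> g_sum p_sum p_neq_g.
have [i p_neq_g_i] : exists i, p i != g i.
  apply/existsP; apply: contraT; rewrite negb_exists => /forallP eq_pg.
  by exfalso; apply: p_neq_g; apply: funext => i; apply/eqP/negPn/eq_pg.
have pg_neq0 : p i - g i != 0 by rewrite subr_eq0.
pose v j := ((j == i)%:R - g i) / (p i - g i).
have v_dot y : \sum_j v j * y j = (y i - g i * \sum_j y j) / (p i - g i).
  under eq_bigr do rewrite mulrAC.
  rewrite -mulr_suml; congr (_ / _).
  under eq_bigr do rewrite mulrBl.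
  rewrite sumrB -mulr_sumr (bigD1 i) //= eqxx mul1r big1 ?addr0 // => j /negbTE ->.
  by rewrite mul0r.
exists v; split; [rewrite (v_dot g) | rewrite (v_dot p)].
- by rewrite g_sum mulr1 subrr mul0r.
- by rewrite p_sum mulr1 divff.
Qed.

Lemma small_perturbation_bound g v : (forall i, 0 < g i) ->
  exists2 eps, 0 < eps &
    forall u, (forall i, `|u i| < eps) -> forall i j, `|u i| * `|v j| <= g i.
Proof.
move=> g_gt0.
pose m := \big[Num.min/1]_i g i.
pose K := \big[Num.max/1]_j `|v j|.
have m_gt0 : 0 < m by apply: lt_bigmin.
have K_ge1 : 1 <= K by apply: bigmax_ge_id.
have K_gt0 : 0 < K by apply: lt_le_trans K_ge1.
exists (m / K) => [|u u_small i j]; first by rewrite divr_gt0.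
apply: (@le_trans _ _ m); last exact: bigmin_le.
rewrite -(divfK (lt0r_neq0 K_gt0) m) ler_pM //.
  exact/ltW/u_small.
exact: le_bigmax.
Qed.

End RankOnePerturbation.

Section Gibbs.
Context {R : realType} {n : nat} (beta : R) (E : 'I_n.+2 -> R).

Lemma partition_function_gt0 : 0 < \sum_j qfac beta E j ord0.
Proof.
rewrite (bigD1 ord0) //= ltr_pwDl ?expR_gt0 // sumr_ge0 // => j _.
exact/ltW/expR_gt0.
Qed.

Lemma gibbs_gt0 i : 0 < gibbs beta E i.
Proof. by rewrite divr_gt0 ?expR_gt0 ?partition_function_gt0. Qed.

Lemma gibbs_sum : \sum_i gibbs beta E i = 1.
Proof. by rewrite -mulr_suml divff // lt0r_neq0 ?partition_function_gt0. Qed.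

End Gibbs.

Theorem mainTheorem6 (R : realType) (n : nat) (beta : R) (E : 'I_n.+2 -> R)
  (p : 'I_n.+2 -> R) :
  0 < beta -> E ord0 = 0 -> injective E ->
  is_state p -> p <> gibbs beta E ->
  rel_interior_simplex_plane (TP_orbit beta E p) (gibbs beta E).
Proof.
move=> _ _ _ [_ p_sum] p_neq_g; set g := gibbs beta E.
have g_sum : \sum_i g i = 1 by apply: gibbs_sum.
have [v [v_g v_p]] := separating_functional g_sum p_sum p_neq_g.
have [eps eps_gt0 small] := small_perturbation_bound v (gibbs_gt0 beta E).
exists eps; split => // x x_sum x_near.
pose u i := x i - g i.
have u_sum : \sum_i u i = 0 by rewrite sumrB x_sum g_sum subrr.
exists (perturb_mx g u v); split; [split; [|split] |].
- by move=> i j; apply/perturb_mx_ge0/small.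
- by move=> j; rewrite sum_col_perturb_mx g_sum u_sum mulr0 addr0.
- by rewrite mxapp_perturb_mx g_sum v_g; apply: funext => i; rewrite mulr1 mulr0 addr0.
- by rewrite mxapp_perturb_mx p_sum v_p; apply: funext => i; rewrite !mulr1 addrC subrK.
Qed.
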